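(* Let $n\ge 1$, $r\ge 1$, and $A,B\in U(2^n)$. If the $(n+1)$-qubit unitary $$D=\ket{0}\!\bra{0}\otimes A+\ket{1}\!\bra{1}\otimes B$$ lies in $\mathcal{C}_r^{(n+1)}$, then both $A$ and $B$ lie in $\mathcal{C}_r^{(n)}$.
   Context: The $n$-qubit Pauli group is $\mathcal{P}_n=\{\omega P_1\otimes\cdots\otimes P_n:\ \omega\in\{\pm1,\pm \mathrm{i}\},\ P_j\in\{I,X,Y,Z\}\}$. The $n$-qubit Clifford hierarchy is defined recursively by $\mathcal{C}_1^{(n)}:=\mathcal{P}_n$ and $\mathcal{C}_{k+1}^{(n)}:=\{U\in U(2^n):\ UPU^\dagger\in\mathcal{C}_k^{(n)}\text{ for all }P\in\mathcal{P}_n\}$. In $D$, the first tensor factor is a single qubit (the ''control'') and the second is the $n$-qubit register. *)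

(* Scalars: an arbitrary numeric algebraically closed field C
   with conjugation (e.g. the complex numbers). *)
From HB Require Import structures.
From mathcomp Require Import all_boot all_order all_algebra.
From mathcomp Require Export mxtens.
Set Implicit Arguments. Unset Strict Implicit. Unset Printing Implicit Defensive.
Import Order.TTheory GRing.Theory Num.Theory.
Local Open Scope ring_scope.

Section Qubits.
Variable C : numClosedFieldType.

Definition adjmx m n (A : 'M[C]_(m, n)) : 'M[C]_(n, m) := map_mx Num.conj A^T.

Definition unitary d (U : 'M[C]_d) : Prop := U *m adjmx U = 1%:M.

(* the single-qubit Pauli matrices I, X, Y, Z indexed by 'I_4 *)
Definition pauli1 (a : 'I_4) : 'M[C]_2 :=
  \matrix_(i < 2, j < 2)
    match nat_of_ord a with
    | 0 => if i == j then 1 else 0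
    | 1 => if i == j then 0 else 1
    | 2 => if i == j then 0 else (if i == 0 :> nat then - 'i else 'i)
    | _ => if i == j then (if i == 0 :> nat then 1 else -1) else 0
    end.

Definition qcast n : (2 * 2 ^ n = 2 ^ n.+1)%N := esym (expnS 2 n).

(* two-qubit-register tensor product: first factor is the first qubit *)
Definition qtens n (A : 'M[C]_2) (B : 'M[C]_(2 ^ n)) : 'M[C]_(2 ^ n.+1) :=
  castmx (qcast n, qcast n) (A *t B).

Fixpoint pauli_string (n : nat) : 'M[C]_(2 ^ n) -> Prop :=
  match n with
  | 0 => fun M => M = 1%:M
  | n'.+1 => fun M => exists (a : 'I_4) (M' : 'M[C]_(2 ^ n')),
                pauli_string M' /\ M = qtens (pauli1 a) M'
  end.

Definition pauli_group n (M : 'M[C]_(2 ^ n)) : Prop :=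
  exists (k : 'I_4) (P : 'M[C]_(2 ^ n)), pauli_string P /\ M = ('i ^+ k) *: P.

(* Clifford hierarchy: clifford n k U  <->  U \in C_k^(n)  (k >= 1);
   C_0 is not defined in the paper and is taken empty here. *)
Fixpoint clifford (n k : nat) (U : 'M[C]_(2 ^ n)) : Prop :=
  match k with
  | 0 => False
  | k'.+1 =>
      match k' with
      | 0 => pauli_group U
      | _ => unitary U /\
             forall P : 'M[C]_(2 ^ n), pauli_group P ->
               clifford k' (U *m P *m adjmx U)
      end
  end.

Definition proj0 : 'M[C]_2 := \matrix_(i < 2, j < 2) (if (i == 0 :> nat) && (j == 0 :> nat) then 1 else 0).
Definition proj1 : 'M[C]_2 := \matrix_(i < 2, j < 2) (if (i == 1 :> nat) && (j == 1 :> nat) then 1 else 0).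

Definition controlled n (A B : 'M[C]_(2 ^ n)) : 'M[C]_(2 ^ n.+1) :=
  qtens proj0 A + qtens proj1 B.

End Qubits.

(* Write D(A, B) for the controlled unitary |0><0| (x) A + |1><1| (x) B.  Such
   matrices multiply blockwise, D(A, B)^dagger = D(A^dagger, B^dagger), and
   I (x) P = D(P, P); hence conjugating the Pauli I (x) P by D(A, B) gives
   D(A P A^dagger, B P B^dagger), and induction on r reduces the theorem to
   r = 1.  There, a Pauli operator of the form D(A, B) has off-diagonal block 0,
   so its first tensor factor is I or Z and both diagonal blocks are a phase
   i^k times one and the same Pauli string. *)
From mathcomp Require Import all_boot all_order all_algebra.
Set Implicit Arguments. Unset Strict Implicit. Unset Printing Implicit Defensive.
Import Order.TTheory GRing.Theory Num.Theory.
Local Open Scope ring_scope.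

Section SquareCast.
Variables (R : pzRingType) (a b : nat) (e : a = b).

Lemma castmx_sqM (X Y : 'M[R]_a) :
  castmx (e, e) (X *m Y) = castmx (e, e) X *m castmx (e, e) Y.
Proof. by case: b / e. Qed.

Lemma castmx_sq1 : castmx (e, e) (1%:M : 'M[R]_a) = 1%:M.
Proof. by case: b / e. Qed.

End SquareCast.

Lemma tensmx11 (R : comPzRingType) m n :
  (1%:M : 'M[R]_m) *t (1%:M : 'M[R]_n) = 1%:M.
Proof.
apply/matrixP=> i j.
case: (mxtens_indexP i) => i0 i1; case: (mxtens_indexP j) => j0 j1.
rewrite tensmxE !mxE (inj_eq (can_inj (@mxtens_indexK m n))) xpair_eqE.
by case: (i0 == j0); case: (i1 == j1); rewrite ?mulr1 ?mulr0.
Qed.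

Section Qubits.
Variable C : numClosedFieldType.

Lemma adjmxD m n (X Y : 'M[C]_(m, n)) : adjmx (X + Y) = adjmx X + adjmx Y.
Proof. by rewrite /adjmx linearD map_mxD. Qed.

Lemma expCi_mod4 m : 'i ^+ (m %% 4) = 'i ^+ m :> C.
Proof.
have i4 : 'i ^+ 4 = 1 :> C by rewrite (exprM _ 2 2) sqrCi sqrrN expr1n.
by rewrite {2}(divn_eq m 4) exprD mulnC exprM i4 expr1n mul1r.
Qed.

Section Tensor.
Variable n : nat.
Implicit Types (X : 'M[C]_2) (P Q : 'M[C]_(2 ^ n)).

Lemma qtens_mul X X' P Q : qtens X P *m qtens X' Q = qtens (X *m X') (P *m Q).
Proof. by rewrite /qtens -castmx_sqM tensmx_mul. Qed.

Lemma qtensDl X X' P : qtens (X + X') P = qtens X P + qtens X' P.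
Proof. by apply/matrixP=> i j; rewrite !(castmxE, mxE) mulrDl. Qed.

Lemma qtens11 : qtens 1%:M (1%:M : 'M[C]_(2 ^ n)) = 1%:M.
Proof. by rewrite /qtens tensmx11 castmx_sq1. Qed.

Lemma adjmx_qtens X P : adjmx (qtens X P) = qtens (adjmx X) (adjmx P).
Proof. by rewrite /adjmx /qtens trmx_cast map_castmx trmx_tens map_mxT. Qed.

Definition qblock (M : 'M[C]_(2 ^ n.+1)) (x y : 'I_2) : 'M[C]_(2 ^ n) :=
  \matrix_(i, j) M (cast_ord (qcast n) (mxtens_index (x, i)))
                   (cast_ord (qcast n) (mxtens_index (y, j))).

Lemma qtens0 P : qtens 0 P = 0.
Proof. by apply/matrixP=> i j; rewrite !(castmxE, mxE) mul0r. Qed.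

Lemma qblockD M N x y : qblock (M + N) x y = qblock M x y + qblock N x y.
Proof. by apply/matrixP=> i j; rewrite !mxE. Qed.

Lemma qblockZ c M x y : qblock (c *: M) x y = c *: qblock M x y.
Proof. by apply/matrixP=> i j; rewrite !mxE. Qed.

Lemma qblock0 x y : qblock 0 x y = 0.
Proof. by apply/matrixP=> i j; rewrite !mxE. Qed.

Lemma qblock_qtens X P x y : qblock (qtens X P) x y = X x y *: P.
Proof. by apply/matrixP=> i j; rewrite !mxE castmxE !cast_ordK tensmxE. Qed.

Lemma qtens_neq0 X P : X != 0 -> P != 0 -> qtens X P != 0.
Proof.
move=> nzX nzP; apply: contra nzX => /eqP XP0; apply/eqP/matrixP=> x y.
have /eqP := congr1 (fun M => qblock M x y) XP0.
by rewrite qblock_qtens qblock0 scaler_eq0 (negbTE nzP) orbF mxE => /eqP.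
Qed.

End Tensor.

Ltac case_ord2 i := case: i => [[|[|?]] ?] //=.

Lemma proj0_idem : proj0 C *m proj0 C = proj0 C.
Proof.
apply/matrixP=> i j; rewrite !mxE big_ord_recl big_ord1 !mxE.
by case_ord2 i; case_ord2 j; rewrite ?mulr0 ?mulr1 ?addr0.
Qed.

Lemma proj1_idem : proj1 C *m proj1 C = proj1 C.
Proof.
apply/matrixP=> i j; rewrite !mxE big_ord_recl big_ord1 !mxE.
by case_ord2 i; case_ord2 j; rewrite ?mulr0 ?mulr1 ?add0r.
Qed.

Lemma proj01 : proj0 C *m proj1 C = 0.
Proof.
apply/matrixP=> i j; rewrite !mxE big_ord_recl big_ord1 !mxE.
by case_ord2 i; case_ord2 j; rewrite ?mulr0 ?mul0r ?addr0.
Qed.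

Lemma proj10 : proj1 C *m proj0 C = 0.
Proof.
apply/matrixP=> i j; rewrite !mxE big_ord_recl big_ord1 !mxE.
by case_ord2 i; case_ord2 j; rewrite ?mulr0 ?mul0r ?addr0.
Qed.

Lemma proj0D1 : proj0 C + proj1 C = 1%:M.
Proof. by apply/matrixP=> i j; rewrite !mxE; case_ord2 i; case_ord2 j; rewrite ?addr0 ?add0r. Qed.

Lemma adjmx_proj0 : adjmx (proj0 C) = proj0 C.
Proof. by apply/matrixP=> i j; rewrite !mxE; case_ord2 i; case_ord2 j; rewrite ?conjC0 ?conjC1. Qed.

Lemma adjmx_proj1 : adjmx (proj1 C) = proj1 C.
Proof. by apply/matrixP=> i j; rewrite !mxE; case_ord2 i; case_ord2 j; rewrite ?conjC0 ?conjC1. Qed.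

Section Controlled.
Variable n : nat.
Implicit Types A B P : 'M[C]_(2 ^ n).

Lemma controlled_mul A B A' B' :
  controlled A B *m controlled A' B' = controlled (A *m A') (B *m B').
Proof.
rewrite /controlled mulmxDl !mulmxDr !qtens_mul proj0_idem proj1_idem proj01 proj10.
by rewrite [qtens 0 _]qtens0 [qtens 0 _]qtens0 addr0 add0r.
Qed.

Lemma adjmx_controlled A B :
  adjmx (controlled A B) = controlled (adjmx A) (adjmx B).
Proof. by rewrite /controlled adjmxD !adjmx_qtens adjmx_proj0 adjmx_proj1. Qed.

Lemma qtens1mx P : qtens 1%:M P = controlled P P.
Proof. by rewrite -proj0D1 qtensDl. Qed.

Lemma controlled11 : controlled 1%:M 1%:M = 1%:M :> 'M[C]_(2 ^ n.+1).
Proof. by rewrite -qtens1mx qtens11. Qed.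

Lemma controlled_conj A B P :
  controlled A B *m qtens 1%:M P *m adjmx (controlled A B) =
  controlled (A *m P *m adjmx A) (B *m P *m adjmx B).
Proof. by rewrite qtens1mx adjmx_controlled !controlled_mul. Qed.

Lemma qblock_controlled A B x y :
  qblock (controlled A B) x y = proj0 C x y *: A + proj1 C x y *: B.
Proof. by rewrite qblockD !qblock_qtens. Qed.

Lemma qblock_controlled00 A B : qblock (controlled A B) 0 0 = A.
Proof. by rewrite qblock_controlled !mxE scale1r scale0r addr0. Qed.

Lemma qblock_controlled11 A B : qblock (controlled A B) 1 1 = B.
Proof. by rewrite qblock_controlled !mxE scale1r scale0r add0r. Qed.

Lemma qblock_controlled01 A B : qblock (controlled A B) 0 1 = 0.
Proof. by rewrite qblock_controlled !mxE !scale0r addr0. Qed.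

Lemma controlled_inj A B A' B' :
  controlled A B = controlled A' B' -> A = A' /\ B = B'.
Proof.
move=> E; split.
- by rewrite -(qblock_controlled00 A B) E qblock_controlled00.
- by rewrite -(qblock_controlled11 A B) E qblock_controlled11.
Qed.

Lemma unitary_controlled A B :
  unitary (controlled A B) -> unitary A /\ unitary B.
Proof.
by rewrite /unitary adjmx_controlled controlled_mul -controlled11 => /controlled_inj.
Qed.

End Controlled.

Lemma pauli1_I : pauli1 C 0 = 1%:M.
Proof. by apply/matrixP=> i j; rewrite !mxE /=; case: eqP. Qed.

Lemma pauli1_neq0 a : pauli1 C a != 0.
Proof.
case: a => [[|[|[|[|a]]]] lt_a4] //.
- by apply/eqP=> /matrixP/(_ 0 0); rewrite !mxE /=; apply/eqP/oner_neq0.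
- by apply/eqP=> /matrixP/(_ 0 1); rewrite !mxE /=; apply/eqP/oner_neq0.
- by apply/eqP=> /matrixP/(_ 0 1); rewrite !mxE /=; apply/eqP; rewrite oppr_eq0 neq0Ci.
- by apply/eqP=> /matrixP/(_ 0 0); rewrite !mxE /=; apply/eqP/oner_neq0.
Qed.

Lemma pauli1_diag a : pauli1 C a 0 1 = 0 ->
  pauli1 C a 0 0 = 1 /\ exists m, pauli1 C a 1 1 = 'i ^+ m.
Proof.
case: a => [[|[|[|[|a]]]] lt_a4] //; rewrite !mxE //=.
- by split=> //; exists 0%N.
- by move/eqP; rewrite oner_eq0.
- by move/eqP; rewrite oppr_eq0 (negbTE (neq0Ci C)).
- by split=> //; exists 2%N; rewrite sqrCi.
Qed.

Lemma pauli_string_neq0 n (S : 'M[C]_(2 ^ n)) : pauli_string S -> S != 0.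
Proof.
elim: n S => [|n IHn] S /=.
  by move=> ->; apply/eqP=> /matrixP/(_ ord0 ord0); rewrite !mxE; apply/eqP/oner_neq0.
by move=> [a [S' [PS' ->]]]; rewrite qtens_neq0 ?pauli1_neq0 ?IHn.
Qed.

Lemma pauli_groupZi n m (S : 'M[C]_(2 ^ n)) :
  pauli_string S -> pauli_group ('i ^+ m *: S).
Proof.
by move=> PS; exists (Ordinal (ltn_pmod m (isT : (0 < 4)%N))), S; rewrite expCi_mod4.
Qed.

Lemma pauli_qtens1mx n (P : 'M[C]_(2 ^ n)) :
  pauli_group P -> pauli_group (qtens 1%:M P).
Proof.
move=> [k [S [PS ->]]]; exists k, (qtens (pauli1 C 0) S); split; first by exists 0, S.
by apply/matrixP=> i j; rewrite pauli1_I !(castmxE, mxE) mulrCA.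
Qed.

Lemma pauli_controlled n (A B : 'M[C]_(2 ^ n)) :
  pauli_group (controlled A B) -> pauli_group A /\ pauli_group B.
Proof.
move=> [k [_ [[a [S [PS ->]]] E]]].
have blockE x y : qblock (controlled A B) x y = ('i ^+ k * pauli1 C a x y) *: S.
  by rewrite E qblockZ qblock_qtens scalerA.
have nzS := pauli_string_neq0 PS.
have offdiag : pauli1 C a 0 1 = 0.
  move: (blockE 0 1); rewrite qblock_controlled01 => /esym/eqP.
  rewrite scaler_eq0 (negbTE nzS) orbF mulf_eq0 expf_eq0 (negbTE (neq0Ci C)) andbF.
  by move/eqP.
have [a00 [m a11]] := pauli1_diag offdiag.
split.
- by rewrite -(qblock_controlled00 A B) blockE a00 mulr1; apply: pauli_groupZi.
- by rewrite -(qblock_controlled11 A B) blockE a11 -exprD; apply: pauli_groupZi.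
Qed.

Lemma clifford_controlled n r (A B : 'M[C]_(2 ^ n)) :
  clifford r (controlled A B) -> clifford r A /\ clifford r B.
Proof.
elim: r A B => [|[|r] IHr] A B //=; first exact: pauli_controlled.
move=> [/unitary_controlled [UA UB] cliffD].
suff conj_clifford P : pauli_group P ->
    clifford r.+1 (A *m P *m adjmx A) /\ clifford r.+1 (B *m P *m adjmx B).
  by split; split=> // P /conj_clifford [].
by move=> /pauli_qtens1mx /cliffD; rewrite controlled_conj; apply: IHr.
Qed.

End Qubits.

Theorem mainTheorem1 (C : numClosedFieldType) (n r : nat)
  (A B : 'M[C]_(2 ^ n)) :
  (1 <= n)%N -> (1 <= r)%N -> unitary A -> unitary B ->
  clifford r (controlled A B) ->
  clifford r A /\ clifford r B.
Proof. by move=> _ _ _ _; apply: clifford_controlled. Qed.
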